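(* Let $m,a,b,t\in\mathbb{N}$ with $m\geq 3$, $a\geq 1$, $t\in\{2,\ldots,m-1\}$ and $(t-1)(am+1)<bm+t<t(am+1)$, and let $S=\langle m,\ am+1,\ bm+t\rangle$. If $\mathrm{Ap}(S,m)=\{w(0),w(1),\ldots,w(m-1)\}$, where $w(i)$ is the least element of $S$ congruent to $i$ modulo $m$, then \[ w(i)=\Big\lfloor \frac{i}{t}\Big\rfloor (bm+t)+(i\bmod t)(am+1)\quad\text{for all } i\in\{0,1,\ldots,m-1\}. \]
   Context: $\mathbb{N}=\{0,1,2,\ldots\}$. $\langle A\rangle$ denotes the submonoid of $(\mathbb{N},+)$ generated by $A$ (here $S$ is a numerical semigroup, i.e. has finite complement in $\mathbb{N}$). For $n\in S\setminus\{0\}$, $\mathrm{Ap}(S,n)=\{s\in S: s-n\notin S\}$. $\lfloor x\rfloor$ is the floor and $a\bmod b$ the remainder of the division of $a$ by $b$. *)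

From mathcomp Require Import all_boot.
Set Implicit Arguments. Unset Strict Implicit. Unset Printing Implicit Defensive.

Definition in_sg3 (n1 n2 n3 s : nat) : Prop :=
  exists x y z : nat, s = x * n1 + y * n2 + z * n3.

Definition is_least_in_class3 (n1 n2 n3 n i w : nat) : Prop :=
  in_sg3 n1 n2 n3 w /\ w = i %[mod n] /\
  (forall s, in_sg3 n1 n2 n3 s -> s = i %[mod n] -> w <= s).

From mathcomp Require Import all_boot.
From mathcomp Require Import zify.

Set Implicit Arguments.
Unset Strict Implicit.
Unset Printing Implicit Defensive.

(* Put n2 = am + 1 and n3 = bm + t, so that n2 = 1 and n3 = t modulo m.  An
   element x m + y n2 + z n3 of S is congruent to k = y + z t, and replacing
   each t copies of n2 by one copy of n3 (allowed since n3 < t n2) shows it is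
   at least g k := (k %/ t) n3 + (k %% t) n2.  Since (t - 1) n2 < n3, g is
   nondecreasing, and the least k congruent to i is i itself; hence g i, which
   lies in S and is congruent to i, is the least such element. *)

Section GreedySum.

Variables t n2 n3 : nat.

Definition greedy_sum (k : nat) : nat := k %/ t * n3 + k %% t * n2.

Lemma greedy_sum_divn_eq q r : r < t -> greedy_sum (q * t + r) = q * n3 + r * n2.
Proof.
move=> lt_rt; rewrite /greedy_sum divnMDl ?(leq_ltn_trans _ lt_rt) // modnMDl.
by rewrite divn_small // modn_small // addn0.
Qed.

Lemma greedy_sum_le y z : 0 < t -> n3 <= t * n2 ->
  greedy_sum (y + z * t) <= y * n2 + z * n3.
Proof.
move=> t_gt0 le_n3; rewrite {1 2}(divn_eq y t).
have lt_yt := ltn_pmod y t_gt0.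
have -> : y %/ t * t + y %% t + z * t = (y %/ t + z) * t + y %% t by lia.
rewrite greedy_sum_divn_eq //.
have : y %/ t * n3 <= y %/ t * (t * n2) by rewrite leq_mul2l le_n3 orbT.
nia.
Qed.

Lemma greedy_sum_nondecreasing : 0 < t -> (t - 1) * n2 <= n3 ->
  {homo greedy_sum : i k / i <= k}.
Proof.
move=> t_gt0 le_n3; apply: homo_leq leqnn leq_trans _ => k.
rewrite {1 2}(divn_eq k t); have lt_kt := ltn_pmod k t_gt0.
case: (ltnP (k %% t).+1 t) => [lt_rt | le_tr].
  by rewrite -addnS !greedy_sum_divn_eq //; lia.
have -> : (k %/ t * t + k %% t).+1 = (k %/ t).+1 * t + 0 by lia.
rewrite !greedy_sum_divn_eq //.
have : k %% t * n2 <= (t - 1) * n2 by rewrite leq_mul2r; apply/orP; right; lia.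
lia.
Qed.

Lemma lin_comb_mod m y z : n2 = 1 %[mod m] -> n3 = t %[mod m] ->
  y * n2 + z * n3 = y + z * t %[mod m].
Proof.
move=> n2_mod n3_mod.
by rewrite -modnDm -(modnMmr y) -(modnMmr z) n2_mod n3_mod !modnMmr modnDm muln1.
Qed.

Lemma greedy_sum_mod m k : n2 = 1 %[mod m] -> n3 = t %[mod m] ->
  greedy_sum k = k %[mod m].
Proof.
move=> n2_mod n3_mod; rewrite /greedy_sum addnC lin_comb_mod //.
by rewrite addnC -divn_eq.
Qed.

Lemma in_sg3_ge_greedy_sum m s : 0 < t -> n3 <= t * n2 ->
  n2 = 1 %[mod m] -> n3 = t %[mod m] -> in_sg3 m n2 n3 s ->
  exists2 k, s = k %[mod m] & greedy_sum k <= s.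
Proof.
move=> t_gt0 le_n3 n2_mod n3_mod [x [y [z ->]]].
exists (y + z * t); first by rewrite -addnA modnMDl lin_comb_mod.
by rewrite -addnA (leq_trans (greedy_sum_le _ _ t_gt0 le_n3)) ?leq_addl.
Qed.

End GreedySum.

Theorem proposition3p6 (m a b t : nat) :
  3 <= m -> 1 <= a -> 2 <= t -> t <= m - 1 ->
  (t - 1) * (a * m + 1) < b * m + t ->
  b * m + t < t * (a * m + 1) ->
  forall i, i < m ->
    is_least_in_class3 m (a * m + 1) (b * m + t) m i
      ((i %/ t) * (b * m + t) + (i %% t) * (a * m + 1)).
Proof.
move=> _ _ t_ge2 _ lt_n3 gt_n3 i lt_im.
have t_gt0 : 0 < t by apply: leq_trans t_ge2.
have n2_mod : a * m + 1 = 1 %[mod m] by rewrite modnMDl.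
have n3_mod : b * m + t = t %[mod m] by rewrite modnMDl.
split; [|split].
- by exists 0, (i %% t), (i %/ t); rewrite add0n addnC.
- exact: greedy_sum_mod.
move=> s s_in s_mod.
have [k k_mod le_ks] := in_sg3_ge_greedy_sum t_gt0 (ltnW gt_n3) n2_mod n3_mod s_in.
have le_ik : i <= k by rewrite -(modn_small lt_im) -s_mod k_mod leq_mod.
exact: leq_trans (greedy_sum_nondecreasing t_gt0 (ltnW lt_n3) le_ik) le_ks.
Qed.
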